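(* For all $t\in\mathbb{R}$ and all $s\in[t+\tfrac13,\,t+\tfrac23)$, one has $\mathbf{R}(t)\cdot\mathbf{R}(s)\le 0$.
   Context: For $t\in[-\tfrac12,0)$ define points of $S^2\subset\mathbb{R}^3$: $\mathbf r_1(t)=\big(\tfrac{1}{\sqrt2},\,t,\,\sqrt{\tfrac12-t^2}\big)$, $\mathbf r_2(t)=\Big(-\tfrac{\frac12+t}{1+t},\,\tfrac1{\sqrt2},\,\tfrac1{\sqrt2}\tfrac{\sqrt{\frac12-t^2}}{1+t}\Big)$, $\mathbf r_3(t)=\mathbf r_1(t)\times\mathbf r_2(t)=\Big(-\tfrac1{\sqrt2}\tfrac{\sqrt{\frac12-t^2}}{1+t},\,-\sqrt{\tfrac12-t^2},\,\tfrac{\frac12+t+t^2}{1+t}\Big)$. Let $R_{\pi/2}$ be the rotation $(x,y,z)\mapsto(-y,x,z)$ (by $\pi/2$ about the $z$-axis). Define $\mathbf r_0:[0,\tfrac14)\to S^2$ by $\mathbf r_0(t)=\mathbf r_1(6t-\tfrac12)$ for $t\in[0,\tfrac1{12})$, $\mathbf r_0(t)=R_{\pi/2}^3\mathbf r_2(6t-1)$ for $t\in[\tfrac1{12},\tfrac16)$, $\mathbf r_0(t)=R_{\pi/2}^2\mathbf r_3(6t-\tfrac32)$ for $t\in[\tfrac16,\tfrac14)$. Define $\mathbf R:[0,1)\to S^2$ by $\mathbf R(t)=R_{\pi/2}^k\,\mathbf r_0(t-\tfrac k4)$ for $t\in[\tfrac k4,\tfrac{k+1}4)$, $k=0,1,2,3$,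 and extend $\mathbf R$ to $\mathbb R$ periodically with period $1$: $\mathbf R(t):=\mathbf R(t-\lfloor t\rfloor)$. *)

From Stdlib Require Import Reals Lra.
Open Scope R_scope.

Definition vec3 : Type := (R * R * R)%type.

Definition dot (u v : vec3) : R :=
  let '(u1, u2, u3) := u in let '(v1, v2, v3) := v in u1*v1 + u2*v2 + u3*v3.

Definition cross (u v : vec3) : vec3 :=
  let '(u1, u2, u3) := u in let '(v1, v2, v3) := v in
  (u2*v3 - u3*v2, u3*v1 - u1*v3, u1*v2 - u2*v1).

Definition rot (u : vec3) : vec3 := let '(x, y, z) := u in (- y, x, z).

Fixpoint rotn (k : nat) (u : vec3) : vec3 :=
  match k with O => u | S k' => rot (rotn k' u) end.

Definition r1 (t : R) : vec3 := (/ sqrt 2, t, sqrt (/2 - t^2)).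

Definition r2 (t : R) : vec3 :=
  (- ((/2 + t) / (1 + t)), / sqrt 2, / sqrt 2 * (sqrt (/2 - t^2) / (1 + t))).

Definition r3 (t : R) : vec3 := cross (r1 t) (r2 t).

Definition r0 (t : R) : vec3 :=
  if Rlt_dec t (1/12) then r1 (6*t - /2)
  else if Rlt_dec t (1/6) then rotn 3 (r2 (6*t - 1))
  else rotn 2 (r3 (6*t - 3/2)).

Definition Rloop0 (t : R) : vec3 :=
  if Rlt_dec t (1/4) then r0 t
  else if Rlt_dec t (2/4) then rotn 1 (r0 (t - 1/4))
  else if Rlt_dec t (3/4) then rotn 2 (r0 (t - 2/4))
  else rotn 3 (r0 (t - 3/4)).

(* floor of t: Int_part t = up t - 1 is the floor *)
Definition Rloop (t : R) : vec3 := Rloop0 (t - IZR (Int_part t)).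

(* The curve R consists of twelve arcs, each a rotation by a multiple of pi/2 of one of
   r1, r2, r3, and the rotation by pi/2 shifts the parameter by 1/4, i.e. by three arcs.
   Parameters at distance in [1/3, 2/3] lie on arcs n and n + d with 4 <= d <= 8 (ordered
   within their arcs when d = 4 or d = 8), so up to rotation fifteen pairs of arcs occur,
   and the symmetry of the dot product reduces them to nine.  After clearing the positive
   denominators 1 + t of r2 and r3, each dot product is c (X - Y) with c > 0, where X and Y
   are products of polynomials with the square roots sqrt (1/2 - t^2); squaring turns
   X <= Y into a polynomial inequality on a triangle or a box, which is certified by the
   nonnegativity of its Bernstein coefficients. *)
From Stdlib Require Import Reals Lra Psatz Lia.
Open Scope R_scope.

Lemma pow_mul_nonneg x y i j : 0 <= x -> 0 <= y -> 0 <= x ^ i * y ^ j.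
Proof. intros; apply Rmult_le_pos; apply pow_le; assumption. Qed.

Ltac for_downto n tac :=
  lazymatch n with O => tac O | S ?m => tac n; for_downto m tac end.

(* Adds [0 <= u^i v^j w^k] for all [i + j + k = n]: when [u + v + w] is constant this is
   the Bernstein basis of degree [n] of a triangle, and [lra] then finds the nonnegative
   Bernstein coefficients of the polynomial to be bounded. *)
Ltac simplex_monomials u v w n :=
  for_downto n ltac:(fun i =>
    let r := eval cbv in (n - i)%nat in
    for_downto r ltac:(fun j =>
      let k := eval cbv in (r - j)%nat in
      pose proof (Rmult_le_pos _ _ (pow_mul_nonneg u v i j ltac:(lra) ltac:(lra))
                                   (pow_le w k ltac:(lra))))).

(* The Bernstein basis of bidegree [(m, n)] of a box, with [x + y] and [u + v] constant. *)
Ltac box_monomials x y m u v n :=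
  for_downto m ltac:(fun i =>
    let i' := eval cbv in (m - i)%nat in
    for_downto n ltac:(fun j =>
      let j' := eval cbv in (n - j)%nat in
      pose proof (Rmult_le_pos _ _ (pow_mul_nonneg x y i i' ltac:(lra) ltac:(lra))
                                   (pow_mul_nonneg u v j j' ltac:(lra) ltac:(lra))))).

(* [q2 t = (1 + t) r2 t] and [q3 t = (1 + t) r3 t]. *)
Definition q2 (t : R) : vec3 :=
  (- (/2 + t), / sqrt 2 * (1 + t), / sqrt 2 * sqrt (/2 - t^2)).

Definition q3 (t : R) : vec3 :=
  (- (/ sqrt 2 * sqrt (/2 - t^2)), - (sqrt (/2 - t^2) * (1 + t)), /2 + t + t^2).

Lemma sqrt2_pos : 0 < sqrt 2.
Proof. apply sqrt_lt_R0; lra. Qed.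

Lemma inv_sqrt2_pos : 0 < / sqrt 2.
Proof. exact (Rinv_0_lt_compat _ sqrt2_pos). Qed.

Lemma inv_sqrt2_sq : / sqrt 2 * / sqrt 2 = /2.
Proof. rewrite <- Rinv_mult, sqrt_sqrt; lra. Qed.

Ltac square_both_sides :=
  apply Rsqr_incr_0_var;
  [ repeat rewrite Rsqr_mult; unfold Rsqr; rewrite ?inv_sqrt2_sq, ?sqrt_sqrt by nra | ].

Ltac finish_dot :=
  pose proof inv_sqrt2_pos; unfold dot, rotn, rot, r1, q2, q3;
  ring_simplify [inv_sqrt2_sq]; nra.

Section Cores.
Variables a b : R.
Hypotheses (Ha : -/2 <= a <= 0) (Hb : -/2 <= b <= 0).

Lemma dot_r1_q2_nonpos : a <= b -> dot (r1 a) (q2 b) <= 0.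
Proof.
  intro Hab.
  assert (key : sqrt (/2 - a^2) * sqrt (/2 - b^2) <= /2 + b - a - a*b).
  { square_both_sides; [simplex_monomials (b-a) (-b) (a+/2) 3%nat; lra | nra]. }
  finish_dot.
Qed.

Lemma dot_q3_r1_nonpos : a <= b -> dot (q3 a) (r1 b) <= 0.
Proof.
  intro Hab.
  assert (key : sqrt (/2 - b^2) * (/2 + a + a^2) <= sqrt (/2 - a^2) * (/2 + b*(1+a))).
  { square_both_sides; [simplex_monomials (b-a) (-b) (a+/2) 4%nat; lra | ].
    apply Rmult_le_pos; [apply sqrt_pos | nra]. }
  finish_dot.
Qed.

Lemma dot_q2_q3_nonpos : a <= b -> dot (q2 a) (q3 b) <= 0.
Proof.
  intro Hab.
  assert (key : sqrt (/2 - a^2) * (/2 + b + b^2) <= sqrt (/2 - b^2) * (/2 + b + a*b)).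
  { square_both_sides; [simplex_monomials (b-a) (-b) (a+/2) 5%nat; lra | ].
    apply Rmult_le_pos; [apply sqrt_pos | nra]. }
  finish_dot.
Qed.

Lemma dot_r1_rot2_r1_nonpos : dot (r1 a) (rotn 2 (r1 b)) <= 0.
Proof.
  assert (key : sqrt (/2 - a^2) * sqrt (/2 - b^2) <= /2 + a*b).
  { square_both_sides; [box_monomials (1+2*a) (-2*a) 2%nat (1+2*b) (-2*b) 2%nat; lra | nra]. }
  finish_dot.
Qed.

Lemma dot_r1_rot_q2_nonpos : dot (r1 a) (rotn 1 (q2 b)) <= 0.
Proof.
  assert (key : / sqrt 2 * sqrt (/2 - a^2) * sqrt (/2 - b^2) <= /2 * (1+b) + a * (/2+b)).
  (* The squares differ by exactly [(1/2 + a + b + a b)^2 / 2]. *)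
  { square_both_sides; [pose proof (pow2_ge_0 (/2 + a + b + a*b)); lra | nra]. }
  finish_dot.
Qed.

Lemma dot_r1_rot3_q3_nonpos : dot (r1 a) (rotn 3 (q3 b)) <= 0.
Proof.
  assert (key : sqrt (/2 - a^2) * (/2 + b + b^2) <= / sqrt 2 * sqrt (/2 - b^2) * (1 + b - a)).
  { pose proof inv_sqrt2_pos.
    square_both_sides; [box_monomials (1+2*a) (-2*a) 2%nat (1+2*b) (-2*b) 4%nat; lra | ].
    apply Rmult_le_pos; [apply Rmult_le_pos; [lra | apply sqrt_pos] | lra]. }
  finish_dot.
Qed.

Lemma dot_q2_rot2_q2_nonpos : dot (q2 a) (rotn 2 (q2 b)) <= 0.
Proof.
  assert (key : /2 * (sqrt (/2 - a^2) * sqrt (/2 - b^2))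
                <= (/2 + a) * (/2 + b) + /2 * ((1 + a) * (1 + b))).
  { square_both_sides; [box_monomials (1+2*a) (-2*a) 4%nat (1+2*b) (-2*b) 4%nat; lra | nra]. }
  finish_dot.
Qed.

Lemma dot_q2_rot_q3_nonpos : dot (q2 a) (rotn 1 (q3 b)) <= 0.
Proof.
  assert (key : / sqrt 2 * sqrt (/2 - a^2) * (/2 + b + b^2)
                <= sqrt (/2 - b^2) * ((/2 + a) * (1 + b) + /2 * (1 + a))).
  { square_both_sides; [box_monomials (1+2*a) (-2*a) 2%nat (1+2*b) (-2*b) 4%nat; lra | ].
    apply Rmult_le_pos; [apply sqrt_pos | nra]. }
  finish_dot.
Qed.

Lemma dot_q3_rot2_q3_nonpos : dot (q3 a) (rotn 2 (q3 b)) <= 0.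
Proof.
  assert (key : (/2 + a + a^2) * (/2 + b + b^2)
                <= sqrt (/2 - a^2) * sqrt (/2 - b^2) * (/2 + (1 + a) * (1 + b))).
  { square_both_sides; [box_monomials (1+2*a) (-2*a) 4%nat (1+2*b) (-2*b) 4%nat; lra | ].
    apply Rmult_le_pos; [apply Rmult_le_pos; apply sqrt_pos | nra]. }
  finish_dot.
Qed.
End Cores.

Lemma mul_pos_nonpos k x : 0 < k -> x <= 0 -> k * x <= 0.
Proof. intros; nra. Qed.

Definition scale (k : R) (u : vec3) : vec3 :=
  let '(x, y, z) := u in (k * x, k * y, k * z).

Lemma dot_scale_l k u v : dot (scale k u) v = k * dot u v.
Proof. destruct u as [[? ?] ?], v as [[? ?] ?]; simpl; ring. Qed.

Lemma dot_scale_r k u v : dot u (scale k v) = k * dot u v.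
Proof. destruct u as [[? ?] ?], v as [[? ?] ?]; simpl; ring. Qed.

Lemma rot_scale k u : rot (scale k u) = scale k (rot u).
Proof. destruct u as [[? ?] ?]; simpl; f_equal; f_equal; ring. Qed.

Lemma r2_scale t : -1 < t -> r2 t = scale (/ (1 + t)) (q2 t).
Proof.
  intro; pose proof sqrt2_pos.
  unfold r2, q2, scale; f_equal; [f_equal|]; field; lra.
Qed.

Lemma r3_scale t : -1 < t -> r3 t = scale (/ (1 + t)) (q3 t).
Proof.
  intro; pose proof sqrt2_pos; pose proof inv_sqrt2_sq.
  unfold r3, cross, r1, r2, q3, scale.
  f_equal; [f_equal|].
  all: rewrite <- ?Rmult_assoc, ?inv_sqrt2_sq; field; lra.
Qed.

Lemma dot_comm u v : dot u v = dot v u.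
Proof. destruct u as [[? ?] ?], v as [[? ?] ?]; simpl; ring. Qed.

Lemma dot_rot u v : dot (rot u) (rot v) = dot u v.
Proof. destruct u as [[? ?] ?], v as [[? ?] ?]; simpl; ring. Qed.

Lemma dot_rot_l u v : dot (rot u) v = dot u (rot (rot (rot v))).
Proof. destruct u as [[? ?] ?], v as [[? ?] ?]; simpl; ring. Qed.

Lemma rot4 u : rot (rot (rot (rot u))) = u.
Proof. destruct u as [[? ?] ?]; simpl; f_equal; f_equal; ring. Qed.

(* [arc n] is the [n]-th twelfth of [R], parametrised by [t] in [[-1/2, 0)]. *)
Fixpoint arc (n : nat) (t : R) : vec3 :=
  match n with
  | 0 => r1 t
  | 1 => rotn 3 (r2 t)
  | 2 => rotn 2 (r3 t)
  | S (S (S m)) => rot (arc m t)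
  end.

Ltac arc_piece k :=
  exists k; eexists; refine (conj _ (conj _ (conj _ eq_refl))); [lia | lra | simpl INR; lra].

Lemma Rloop0_arc x : 0 <= x < 1 -> exists n t,
  (n < 12)%nat /\ -/2 <= t < 0 /\ 12 * x = INR n + 1 + 2 * t /\ Rloop0 x = arc n t.
Proof.
  intro Hx; unfold Rloop0, r0.
  repeat match goal with |- context [Rlt_dec ?p ?q] => destruct (Rlt_dec p q) end;
  first [ arc_piece 0%nat | arc_piece 1%nat | arc_piece 2%nat | arc_piece 3%nat
        | arc_piece 4%nat | arc_piece 5%nat | arc_piece 6%nat | arc_piece 7%nat
        | arc_piece 8%nat | arc_piece 9%nat | arc_piece 10%nat | arc_piece 11%nat
        | exfalso; lra ].
Qed.

Lemma dot_arc_shift q n d t s :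
  dot (arc (3 * q + n) t) (arc (3 * q + n + d) s) = dot (arc n t) (arc (n + d) s).
Proof.
  induction q as [|q IH]; [reflexivity|].
  replace (3 * S q + n)%nat with (3 + (3 * q + n))%nat by lia.
  replace (3 + (3 * q + n) + d)%nat with (3 + (3 * q + n + d))%nat by lia.
  exact (eq_trans (dot_rot _ _) IH).
Qed.

Ltac apply_core :=
  first [ apply dot_r1_q2_nonpos; repeat split; lra
        | apply dot_q3_r1_nonpos; repeat split; lra
        | apply dot_q2_q3_nonpos; repeat split; lra
        | apply dot_r1_rot2_r1_nonpos; repeat split; lra
        | apply dot_r1_rot_q2_nonpos; repeat split; lra
        | apply dot_r1_rot3_q3_nonpos; repeat split; lra
        | apply dot_q2_rot2_q2_nonpos; repeat split; lra
        | apply dot_q2_rot_q3_nonpos; repeat split; lra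
        | apply dot_q3_rot2_q3_nonpos; repeat split; lra ].

Lemma dot_arc_nonpos i d t s : (i < 3)%nat -> -/2 <= t < 0 -> -/2 <= s < 0 ->
  4 <= INR d + 2 * (s - t) <= 8 -> dot (arc i t) (arc (i + d) s) <= 0.
Proof.
  intros Hi Ht Hs Hd.
  assert (d_bounds : (3 < d < 9)%nat) by (split; apply INR_lt; simpl INR; lra).
  assert (i_cases : i = 0%nat \/ i = 1%nat \/ i = 2%nat) by lia.
  assert (d_cases : d = 4%nat \/ d = 5%nat \/ d = 6%nat \/ d = 7%nat \/ d = 8%nat) by lia.
  (* Cancel the common rotation, move the remaining one to the right, clear the
     denominators, and match one of the nine inequalities, possibly after a swap. *)
  destruct i_cases as [-> | [-> | ->]]; destruct d_cases as [-> | [-> | [-> | [-> | ->]]]];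
  simpl INR in Hd; cbn [arc Nat.add rotn];
  rewrite ?dot_rot, ?dot_rot_l, ?rot4;
  rewrite ?(r2_scale t), ?(r3_scale t), ?(r2_scale s), ?(r3_scale s) by lra;
  rewrite ?rot_scale, ?dot_scale_l, ?dot_scale_r;
  repeat (apply mul_pos_nonpos; [apply Rinv_0_lt_compat; lra |]);
  first [ apply_core | rewrite dot_comm, ?dot_rot_l, ?rot4; apply_core ].
Qed.

Lemma dot_Rloop0_nonpos x y : 0 <= x < 1 -> 0 <= y < 1 -> /3 <= y - x <= 2/3 ->
  dot (Rloop0 x) (Rloop0 y) <= 0.
Proof.
  intros Hx Hy Hxy.
  destruct (Rloop0_arc x Hx) as (n & t & Hn & Ht & Ex & ->).
  destruct (Rloop0_arc y Hy) as (m & s & Hm & Hs & Ey & ->).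
  assert (Hnm : (n < m)%nat) by (apply INR_lt; lra).
  set (d := (m - n)%nat).
  assert (Hd : INR d = INR m - INR n) by (apply minus_INR; lia).
  replace m with (n + d)%nat by lia.
  rewrite (Nat.div_mod_eq n 3), dot_arc_shift.
  apply dot_arc_nonpos; [apply Nat.mod_upper_bound; lia | lra | lra | lra].
Qed.

Theorem lemma3p2 : forall t s : R, t + 1/3 <= s -> s < t + 2/3 ->
  dot (Rloop t) (Rloop s) <= 0.
Proof.
  intros t s Hts Hst; unfold Rloop.
  destruct (base_Int_part t) as [Ht1 Ht2], (base_Int_part s) as [Hs1 Hs2].
  assert (Hd := minus_IZR (Int_part s) (Int_part t)).
  assert (Hgap : (-1 < Int_part s - Int_part t < 2)%Z) by (split; apply lt_IZR; lra).
  assert (Hcases : (Int_part s - Int_part t = 0 \/ Int_part s - Int_part t = 1)%Z) by lia.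
  destruct Hcases as [E | E]; rewrite E in Hd; simpl IZR in Hd.
  - apply dot_Rloop0_nonpos; lra.
  - rewrite dot_comm; apply dot_Rloop0_nonpos; lra.
Qed.
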